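(* In the setting described in the context, suppose Conditions (C1) and (C2) hold, the correction functions have radius $\rho<1$, and $F(x,\theta,\xi)\in\{-1,+1\}$ for all $x\in\mathcal{X}$. Then for all $x\in\mathcal{X}$, $$m_F\big((\theta,\xi),x,\mathbf{1}(F(x,\theta,\xi)\ge0)\big)\ge\min\Big\{\tfrac{B}{\kappa_0},\tfrac{\rho}{\kappa_0},\sigma_\theta,\sigma_\xi,\tfrac{1}{2\kappa_\theta},\tfrac{\rho}{2\kappa_\theta B},\tfrac{\sigma_h}{2\kappa_\xi B},\tfrac{\rho}{4B\kappa_h\kappa_\xi},\tfrac{1}{4\kappa_h\kappa_\xi}\Big\}.$$ Moreover, for any layer-based weight-shared model $F'(x,\theta')=F(x,\tau^{(1)}(\theta'),\tau^{(2)}(\theta'))$ with $\tau^{(1)}(\theta')=\theta$, $\tau^{(2)}(\theta')=\xi$, the same lower bound holds for $m_{F'}(\theta',x,\mathbf{1}(F'(x,\theta')\ge0))$.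
   Context: Architecture: layer functions $f_0:\mathcal{X}\times\Theta_0\to\mathbb{R}^d$, $f_i:(\mathbb{R}^d)^i\times\Theta_i\to\mathbb{R}^d$ for $1\le i<L$, $f_L:(\mathbb{R}^d)^L\times\Theta_L\to\mathbb{R}$; $\theta=(\theta_0,\dots,\theta_L)$; $h_0(x,\theta)=f_0(x,\theta_0)$, $h_i(x,\theta)=f_i(h_0(x,\theta),\dots,h_{i-1}(x,\theta),\theta_i)$. Correction functions: $c_0,\dots,c_{L-1}:\mathbb{R}^d\times\Xi_i\to\mathbb{R}^d$ with parameters $\xi=(\xi_0,\dots,\xi_{L-1})$ have radius $\rho$ if for all $0\le i\le L-1$, $x\in\mathcal{X}$ and $\hat h\in\mathbb{R}^d$ with $\|\hat h-h_i(x,\theta)\|_2\le\rho$, $c_i(\hat h,\xi_i)=h_i(x,\theta)$. Corrected model: $g_0(x,\theta,\xi)=f_0(x,\theta_0)$; $\tilde h_i(x,\theta,\xi)=c_i(g_i(x,\theta,\xi),\xi_i)$ for $0\le i\le L-1$; $g_i(x,\theta,\xi)=f_i(\tilde h_0(x,\theta,\xi),\dots,\tilde h_{i-1}(x,\theta,\xi),\theta_i)$ for $1\le i\le L$; $F(x,\theta,\xi)=g_L(x,\theta,\xi)$ (so $F(x,\theta,\xi)=h_L(x,\theta)$ on $\mathcal{X}$). Norm on tuples: $|||(v_1,\dots,v_i)|||=\max_j\|v_j\|_2$. Niceness: $f(\cdot,\theta)$ is $(\kappa_\theta,\kappa_h,\sigma_h,\sigma_\theta)$-nice on a set $\mathcal{H}$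 if for all $\hat\theta$ with $\|\theta-\hat\theta\|_2\le\sigma_\theta$ and all $h\in\mathcal{H}$: $\|f(h,\theta)-f(h,\hat\theta)\|_2\le\kappa_\theta\|\theta-\hat\theta\|_2\max\{|||h|||,1\}$, and for all $\hat h$ with $|||h-\hat h|||\le\sigma_h$: $\|f(h,\hat\theta)-f(\hat h,\hat\theta)\|_2\le\kappa_h|||h-\hat h|||$. Condition (C1): for each $i\ge1$, $f_i(\cdot,\theta_i)$ is $(\kappa_\theta,\kappa_h,\sigma_h,\sigma_\theta)$-nice on $\{(h_0(x,\theta),\dots,h_{i-1}(x,\theta)):x\in\mathcal{X}\}$; $\|f_0(x,\theta_0)-f_0(x,\hat\theta_0)\|_2\le\kappa_0\|\theta_0-\hat\theta_0\|_2$ for all $x\in\mathcal{X}$ and all $\hat\theta_0$; and for each $i$, $\|c_i(h,\xi_i)-c_i(h,\hat\xi)\|_2\le\kappa_\xi\max\{\|h\|_2,1\}\|\xi_i-\hat\xi\|_2$ for all $h\in\mathbb{R}^d$ and all $\hat\xi$ with $\|\xi_i-\hat\xi\|_2\le\sigma_\xi$. Condition (C2): $\max\{\|h_i(x,\theta)\|_2,1\}\le B$ for all $0\le i\le L$ and $x\in\mathcal{X}$. All-layer margin of an architecture $F$ with parameter vector $\vartheta$: $m_F(\vartheta,x,y)=\min\{\|\delta\|_2:(y-0.5)F(x,\vartheta+\delta)\le0\}$ for $y\in\{0,1\}$. Layer-based weight sharing: $\theta'\in\mathbb{R}^{d'}$, and each component map $\tau^{(1)}_i$ (producing $\theta_i$)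 and $\tau^{(2)}_i$ (producing $\xi_i$) has the form $\theta'\mapsto(\theta'_{\pi_1},\dots,\theta'_{\pi_{b}})$ for distinct indices $\pi_1,\dots,\pi_b\in[d']$ (no coordinate of $\theta'$ is duplicated within one layer). *)

From HB Require Import structures.
From mathcomp Require Import all_boot all_order all_algebra.
From mathcomp Require Import all_classical reals constructive_ereal ereal.
Unset Printing Implicit Defensive.
Import Order.TTheory GRing.Theory Num.Theory.
Local Open Scope ring_scope.
Local Open Scope classical_set_scope.

Definition norm2 {R : realType} {n : nat} (v : 'rV[R]_n) : R :=
  Num.sqrt (\sum_(j < n) v 0 j ^+ 2).

Definition tnorm {R : realType} {d n : nat} (H : 'I_n -> 'rV[R]_d) : R :=
  \big[Num.max/0]_(j < n) norm2 (H j).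

Definition tsub {R : realType} {d n : nat} (H H' : 'I_n -> 'rV[R]_d) : 'I_n -> 'rV[R]_d :=
  fun j => H j - H' j.

(** Families of parameter vectors theta_i in R^(r i); only indices 0..L
    (resp. 0..L-1) are ever used. *)
Definition Params (R : realType) (r : nat -> nat) := forall i : nat, 'rV[R]_(r i).

Section Arch.
Variables (R : realType) (X : Type) (d L : nat) (p q : nat -> nat).
Variable f0 : X -> 'rV[R]_(p 0) -> 'rV[R]_d.
Variable fm : forall i : nat, ('I_i -> 'rV[R]_d) -> 'rV[R]_(p i) -> 'rV[R]_d.
Variable fL : ('I_L -> 'rV[R]_d) -> 'rV[R]_(p L) -> R.
Variable c : forall i : nat, 'rV[R]_d -> 'rV[R]_(q i) -> 'rV[R]_d.

Definition layer (x : X) (th : Params R p) (n : nat) :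
  ('I_n -> 'rV[R]_d) -> 'rV[R]_d :=
  match n as n0 return ('I_n0 -> 'rV[R]_d) -> 'rV[R]_d with
  | 0 => fun _ => f0 x (th 0%N)
  | k.+1 => fun H => fm k.+1 H (th k.+1)
  end.

(** states post n = (v_0,...,v_{n-1}) with v_k = post k (layer k (v_0..v_{k-1})). *)
Fixpoint states (x : X) (th : Params R p) (post : nat -> 'rV[R]_d -> 'rV[R]_d)
  (n : nat) : 'I_n -> 'rV[R]_d :=
  match n as n0 return 'I_n0 -> 'rV[R]_d with
  | 0 => fun _ => 0
  | k.+1 => fun j =>
      match unlift ord_max j with
      | Some i => states x th post k i
      | None => post k (layer x th k (states x th post k))
      end
  end.

Definition hstates (x : X) (th : Params R p) (n : nat) : 'I_n -> 'rV[R]_d :=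
  states x th (fun _ v => v) n.
Definition h (x : X) (th : Params R p) (i : nat) : 'rV[R]_d :=
  layer x th i (hstates x th i).
Definition hL (x : X) (th : Params R p) : R := fL (hstates x th L) (th L).

Definition cstates (x : X) (th : Params R p) (xi : Params R q) (n : nat) :
  'I_n -> 'rV[R]_d := states x th (fun i v => c i v (xi i)) n.
Definition Fcorr (x : X) (th : Params R p) (xi : Params R q) : R :=
  fL (cstates x th xi L) (th L).

Definition full_norm (v : Params R p * Params R q) : R :=
  Num.sqrt (\sum_(i < L.+1) norm2 (v.1 i) ^+ 2 + \sum_(i < L) norm2 (v.2 i) ^+ 2).

Definition full_add (v w : Params R p * Params R q) : Params R p * Params R q :=
  (fun i => v.1 i + w.1 i, fun i => v.2 i + w.2 i).

(** Layer-based weight sharing: theta_i = (theta'_{pi_1},...,theta'_{pi_b}). *)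
Definition tau1 (d' : nat) (pi1 : forall i : nat, 'I_(p i) -> 'I_d')
  (th' : 'rV[R]_d') : Params R p := fun i => \row_k th' 0 (pi1 i k).
Definition tau2 (d' : nat) (pi2 : forall i : nat, 'I_(q i) -> 'I_d')
  (th' : 'rV[R]_d') : Params R q := fun i => \row_k th' 0 (pi2 i k).
End Arch.

(** (kappa_th,kappa_h,sigma_h,sigma_th)-niceness of f(.,th) on the set Hs of
    tuples; dist is the output distance (Euclidean, or |.| for real outputs). *)
Definition nice {R : realType} {d n m : nat} {Y : Type} (dist : Y -> Y -> R)
  (f : ('I_n -> 'rV[R]_d) -> 'rV[R]_m -> Y) (th : 'rV[R]_m)
  (k_th k_h s_h s_th : R) (Hs : set ('I_n -> 'rV[R]_d)) : Prop :=
  forall thh : 'rV[R]_m, norm2 (th - thh) <= s_th ->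
  forall H, Hs H ->
    dist (f H th) (f H thh) <= k_th * norm2 (th - thh) * Num.max (tnorm H) 1 /\
    (forall Hh, tnorm (tsub H Hh) <= s_h ->
       dist (f H thh) (f Hh thh) <= k_h * tnorm (tsub H Hh)).

Definition all_layer_margin {R : realType} {X V : Type} (add : V -> V -> V)
  (nrm : V -> R) (G : X -> V -> R) (vt : V) (x : X) (y : bool) : \bar R :=
  ereal_inf [set (nrm delta)%:E | delta in
               [set delta | ((nat_of_bool y)%:R - 2^-1) * G x (add vt delta) <= 0]].

From HB Require Import structures.
From mathcomp Require Import all_boot all_order all_algebra.
From mathcomp Require Import all_classical reals constructive_ereal ereal.
From mathcomp Require Import ring lra.
Import Order.TTheory GRing.Theory Num.Theory.
Local Open Scope ring_scope.
Local Open Scope classical_set_scope.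

(** Fix an input x and perturbed parameters (th2, xi2) whose blocks are all
    within e of (th, xi), and put E = 2 k_xi B e.  By strong induction on the
    layer m < L, the corrected state of the perturbed network stays within E of
    h_m: before correction, layer m is within rho of h_m (Lipschitzness of f_0
    for m = 0, niceness of f_m otherwise, using that the history is within E),
    so the correction with the true parameter xi_m would return h_m exactly and
    replacing xi_m by xi2_m costs at most k_xi * 2B * e = E.  Niceness of f_L
    then gives |F(th2, xi2) - h_L| <= k_th e B + k_h E, which is at most rho < 1
    whenever e is below the bound of the theorem.  With e = 0 this shows
    F(th, xi) = h_L, so the value F = +-1 cannot change sign under such
    perturbations.  Every block of a perturbation is bounded by its full
    Euclidean norm, and, under layer-based weight sharing, by the norm of the
    perturbation of the shared vector; hence every sign-flipping perturbation
    has norm at least the bound. *)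

(* Cauchy-Schwarz for finite sums, from the nonnegative quadratic
   t |-> sum_j (a_j t + b_j)^2. *)
Lemma cauchy_schwarz (R : realFieldType) (n : nat) (a b : 'I_n -> R) :
  (\sum_j a j * b j) ^+ 2 <= (\sum_j a j ^+ 2) * (\sum_j b j ^+ 2).
Proof.
set A := \sum_j a j ^+ 2; set C := \sum_j a j * b j; set D := \sum_j b j ^+ 2.
have quad_ge0 t : 0 <= A * t ^+ 2 + 2 * C * t + D.
  have -> : A * t ^+ 2 + 2 * C * t + D = \sum_j (a j * t + b j) ^+ 2.
    rewrite (eq_bigr (fun j => a j ^+ 2 * t ^+ 2 + 2 * (a j * b j) * t + b j ^+ 2)).
      by rewrite !big_split /= -!mulr_suml -mulr_sumr.
    by move=> j _; ring.
  by apply: sumr_ge0 => j _; rewrite sqr_ge0.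
have A_ge0 : 0 <= A by apply: sumr_ge0 => j _; rewrite sqr_ge0.
have [A0|A_neq0] := eqVneq A 0.
  have a0 j : a j = 0.
    apply/eqP; rewrite -sqrf_eq0; apply/eqP.
    by apply: (psumr_eq0P _ A0) => // i _; rewrite sqr_ge0.
  by rewrite /C big1 ?A0 ?expr0n ?mul0r // => j _; rewrite a0 mul0r.
have := mulr_ge0 A_ge0 (quad_ge0 (- C / A)).
have -> : A * (A * (- C / A) ^+ 2 + 2 * C * (- C / A) + D) = A * D - C ^+ 2 by field.
lra.
Qed.

Section EuclideanNorm.
Context {R : realType} {n : nat}.
Implicit Types (u v w : 'rV[R]_n).

Lemma norm2_ge0 v : 0 <= norm2 v.
Proof. exact: sqrtr_ge0. Qed.

Lemma norm2_sq v : norm2 v ^+ 2 = \sum_(j < n) v 0 j ^+ 2.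
Proof. by rewrite /norm2 sqr_sqrtr // sumr_ge0 // => j _; rewrite sqr_ge0. Qed.

Lemma norm2_0 : norm2 (0 : 'rV[R]_n) = 0.
Proof. by rewrite /norm2 big1 ?sqrtr0 // => j _; rewrite mxE expr0n. Qed.

Lemma norm2N v : norm2 (- v) = norm2 v.
Proof. by rewrite /norm2; congr Num.sqrt; apply: eq_bigr => j _; rewrite mxE sqrrN. Qed.

Lemma norm2B u v : norm2 (u - v) = norm2 (v - u).
Proof. by rewrite -norm2N opprB. Qed.

(* Triangle inequality, from Cauchy-Schwarz for the coordinate sums. *)
Lemma norm2D u v : norm2 (u + v) <= norm2 u + norm2 v.
Proof.
set C := \sum_j u 0 j * v 0 j.
have C_le : C <= norm2 u * norm2 v.
  rewrite -[_ * _]ger0_norm ?mulr_ge0 ?norm2_ge0 // -sqrtr_sqr exprMn !norm2_sq.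
  apply: le_trans (ler_norm C) _; rewrite -sqrtr_sqr; apply: ler_wsqrtr.
  exact: cauchy_schwarz.
have sq_le : norm2 (u + v) ^+ 2 <= (norm2 u + norm2 v) ^+ 2.
  have -> : norm2 (u + v) ^+ 2 = norm2 u ^+ 2 + 2 * C + norm2 v ^+ 2.
    rewrite !norm2_sq /C mulr_sumr -!big_split /=; apply: eq_bigr => j _.
    by rewrite mxE; ring.
  have := norm2_ge0 u; have := norm2_ge0 v; nra.
by rewrite -ler_sqr ?nnegrE ?addr_ge0 ?norm2_ge0.
Qed.

Lemma norm2_tri u v w : norm2 (u - w) <= norm2 (u - v) + norm2 (v - w).
Proof. by have := norm2D (u - v) (v - w); rewrite addrA subrK. Qed.

Lemma norm2_subvector m (pi : 'I_m -> 'I_n) v :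
  injective pi -> norm2 (\row_k v 0 (pi k)) <= norm2 v.
Proof.
move=> pi_inj; apply: ler_wsqrtr.
under eq_bigr do rewrite mxE.
rewrite [X in _ <= X](bigID [in pi @: [set: 'I_m]]) /=.
rewrite big_imset /=; last by move=> ? ? _ _; exact: pi_inj.
rewrite [X in _ <= X + _](eq_bigl xpredT) => [|k]; last by rewrite /= in_setT.
by rewrite lerDl sumr_ge0 // => j _; rewrite sqr_ge0.
Qed.

End EuclideanNorm.

Lemma shared_block_le {R : realType} {m n : nat} {idx : 'I_m -> 'I_n} {u w : 'rV[R]_n} :
  injective idx ->
  norm2 ((\row_k u 0 (idx k)) - \row_k (u + w) 0 (idx k)) <= norm2 w.
Proof.
move=> idx_inj.
have -> : (\row_k u 0 (idx k)) - \row_k (u + w) 0 (idx k) = - \row_k w 0 (idx k).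
  by apply/rowP => k; rewrite !mxE opprD addrA subrr sub0r.
by rewrite norm2N norm2_subvector.
Qed.

Lemma full_perturbation_blocks {R : realType} (L : nat) {p q : nat -> nat}
    (vt delta : Params R p * Params R q) :
  (forall i, (i <= L)%N ->
     norm2 (vt.1 i - (full_add R p q vt delta).1 i) <= full_norm R L p q delta) /\
  (forall i, (i < L)%N ->
     norm2 (vt.2 i - (full_add R p q vt delta).2 i) <= full_norm R L p q delta).
Proof.
have sum1_ge0 : 0 <= \sum_(i < L.+1) norm2 (delta.1 i) ^+ 2.
  by apply: sumr_ge0 => i _; rewrite sqr_ge0.
have sum2_ge0 : 0 <= \sum_(i < L) norm2 (delta.2 i) ^+ 2.
  by apply: sumr_ge0 => i _; rewrite sqr_ge0.
split=> i iL; rewrite /= opprD addrA subrr sub0r norm2N /full_norm.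
all: rewrite -[norm2 _]ger0_norm ?norm2_ge0 // -sqrtr_sqr; apply: ler_wsqrtr.
- have : norm2 (delta.1 i) ^+ 2 <= \sum_(j < L.+1) norm2 (delta.1 j) ^+ 2.
    rewrite (bigD1 (Ordinal (iL : (i < L.+1)%N))) //= lerDl.
    by apply: sumr_ge0 => j _; rewrite sqr_ge0.
  lra.
- have : norm2 (delta.2 i) ^+ 2 <= \sum_(j < L) norm2 (delta.2 j) ^+ 2.
    rewrite (bigD1 (Ordinal iL)) //= lerDl.
    by apply: sumr_ge0 => j _; rewrite sqr_ge0.
  lra.
Qed.

Lemma margin_ge0 {R : realType} {X V : Type} {add : V -> V -> V} {nrm : V -> R}
    {G : X -> V -> R} {vt : V} {x : X} {y : bool} :
  (forall delta, 0 <= nrm delta) -> (0%:E <= all_layer_margin add nrm G vt x y)%E.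
Proof. by move=> nrm_ge0; apply: le_ereal_inf_tmp => _ [delta _ <-]; rewrite lee_fin. Qed.

(* A value G x vt = +-1 that moves by less than 1 under every perturbation of size
   below b keeps its sign there, so every sign-flipping perturbation has size >= b. *)
Lemma margin_lower_bound {R : realType} {X V : Type} {add : V -> V -> V}
    {nrm : V -> R} {G : X -> V -> R} {vt : V} {x : X} {b : R} :
  G x vt = 1 \/ G x vt = -1 ->
  (forall delta, nrm delta < b -> `|G x (add vt delta) - G x vt| < 1) ->
  (b%:E <= all_layer_margin add nrm G vt x (0 <= G x vt)%R)%E.
Proof.
move=> G_pm stable; apply: le_ereal_inf_tmp => _ [delta flips <-].
rewrite lee_fin leNgt; apply/negP => /stable.
have half_gt0 : (0 : R) < 2^-1 by rewrite invr_gt0 ltr0n.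
have halfK : (2^-1 : R) * 2 = 1 by rewrite mulVf // pnatr_eq0.
move: flips; rewrite /mkset; case: G_pm => ->; rewrite ?ler01 ?ler0N1 /= ltr_norml.
  by move=> flips /andP[moved _]; nra.
by move=> flips /andP[_ moved]; nra.
Qed.

Definition margin_bound {R : realFieldType} (k0 k_th k_h k_xi s_h s_th s_xi B rho : R)
    : R :=
  Num.min (B / k0) (Num.min (rho / k0) (Num.min s_th (Num.min s_xi
  (Num.min (1 / (2 * k_th)) (Num.min (rho / (2 * k_th * B))
  (Num.min (s_h / (2 * k_xi * B)) (Num.min (rho / (4 * B * k_h * k_xi))
  (1 / (4 * k_h * k_xi))))))))).

(* The inequalities on a perturbation size e <= margin_bound used in the error
   propagation. *)
Lemma margin_bound_conditions {R : realFieldType}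
    {k0 k_th k_h k_xi s_h s_th s_xi B rho e : R} :
  0 < k0 -> 0 < k_th -> 0 < k_h -> 0 < k_xi -> 0 < B ->
  e <= margin_bound k0 k_th k_h k_xi s_h s_th s_xi B rho ->
  [/\ k0 * e <= rho, e <= s_th, e <= s_xi, 2 * k_xi * B * e <= s_h &
      k_th * e * B + k_h * (2 * k_xi * B * e) <= rho].
Proof.
move=> k0_gt0 kth_gt0 kh_gt0 kxi_gt0 B_gt0.
rewrite /margin_bound !le_min => /andP[_ /andP[e_rho0 /andP[e_sth /andP[e_sxi
  /andP[_ /andP[e_rhoth /andP[e_sh /andP[e_rhoh _]]]]]]]].
rewrite ler_pdivlMr // in e_rho0.
rewrite ler_pdivlMr ?mulr_gt0 // in e_rhoth.
rewrite ler_pdivlMr ?mulr_gt0 // in e_sh.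
rewrite ler_pdivlMr ?mulr_gt0 // in e_rhoh.
split; lra.
Qed.

Section StateRecursion.
Context {R : realType} {X : Type} {d : nat} {p q : nat -> nat}.
Context {f0 : X -> 'rV[R]_(p 0%N) -> 'rV[R]_d}.
Context {fm : forall i : nat, ('I_i -> 'rV[R]_d) -> 'rV[R]_(p i) -> 'rV[R]_d}.
Context {c : forall i : nat, 'rV[R]_d -> 'rV[R]_(q i) -> 'rV[R]_d}.

Lemma states_nth x th post n (j : 'I_n) :
  states R X d p f0 fm x th post n j =
  post j (layer R X d p f0 fm x th j (states R X d p f0 fm x th post j)).
Proof.
elim: n j => [|n IH] j; first by case: j.
rewrite /=; case: unliftP => [i ->|-> //].
by rewrite IH /= /bump leqNgt ltn_ord.
Qed.

Lemma hstates_nth x th n (j : 'I_n) :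
  hstates R X d p f0 fm x th n j = h R X d p f0 fm x th j.
Proof. exact: states_nth. Qed.

Lemma cstates_nth x th xi n (j : 'I_n) :
  cstates R X d p q f0 fm c x th xi n j =
  c j (layer R X d p f0 fm x th j (cstates R X d p q f0 fm c x th xi j)) (xi j).
Proof. exact: states_nth. Qed.

End StateRecursion.

Lemma nice_perturb {R : realType} {d n m : nat} {Y : Type} {dist : Y -> Y -> R}
    {f : ('I_n -> 'rV[R]_d) -> 'rV[R]_m -> Y} {th th2 : 'rV[R]_m}
    {k_th k_h s_h s_th B e E : R} {Hs : set ('I_n -> 'rV[R]_d)}
    {H H2 : 'I_n -> 'rV[R]_d} :
  (forall a b c, dist a c <= dist a b + dist b c) ->
  nice dist f th k_th k_h s_h s_th Hs -> Hs H -> 0 <= k_th -> 0 <= k_h ->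
  norm2 (th - th2) <= e -> e <= s_th -> tnorm (tsub H H2) <= E -> E <= s_h ->
  Num.max (tnorm H) 1 <= B ->
  dist (f H th) (f H2 th2) <= k_th * e * B + k_h * E.
Proof.
move=> dist_tri f_nice HsH kth_ge0 kh_ge0 th_e e_sth H_E E_sh H_B.
have [param_lip input_lip] := f_nice th2 (le_trans th_e e_sth) H HsH.
apply: le_trans (dist_tri _ (f H th2) _) _; apply: lerD.
  apply: le_trans param_lip _; apply: ler_pM => //.
  - by rewrite mulr_ge0 ?norm2_ge0.
  - by rewrite le_max ler01 orbT.
  - exact: ler_wpM2l.
apply: le_trans (input_lip H2 (le_trans H_E E_sh)) _.
exact: ler_wpM2l.
Qed.

Section CorrectedNetwork.
Context {R : realType} {X : Type} {d L : nat} {p q : nat -> nat}.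
Context {f0 : X -> 'rV[R]_(p 0%N) -> 'rV[R]_d}.
Context {fm : forall i : nat, ('I_i -> 'rV[R]_d) -> 'rV[R]_(p i) -> 'rV[R]_d}.
Context {fL : ('I_L -> 'rV[R]_d) -> 'rV[R]_(p L) -> R}.
Context {c : forall i : nat, 'rV[R]_d -> 'rV[R]_(q i) -> 'rV[R]_d}.
Context {th : Params R p} {xi : Params R q} {k0 k_th k_h k_xi s_h s_th s_xi B rho : R}.

Hypothesis fm_nice : forall i : nat, (1 <= i < L)%N ->
  nice (fun a b => norm2 (a - b)) (fm i) (th i) k_th k_h s_h s_th
       (range (fun x => hstates R X d p f0 fm x th i)).
Hypothesis fL_nice : nice (fun a b : R => `|a - b|) fL (th L) k_th k_h s_h s_th
  (range (fun x => hstates R X d p f0 fm x th L)).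
Hypothesis f0_lip : forall (x : X) (th0 : 'rV[R]_(p 0%N)),
  norm2 (f0 x (th 0%N) - f0 x th0) <= k0 * norm2 (th 0%N - th0).
Hypothesis c_lip : forall i : nat, (i < L)%N -> forall (v : 'rV[R]_d) (xi0 : 'rV[R]_(q i)),
  norm2 (xi i - xi0) <= s_xi ->
  norm2 (c i v (xi i) - c i v xi0) <= k_xi * Num.max (norm2 v) 1 * norm2 (xi i - xi0).
Hypothesis h_bound : forall (x : X) (i : nat), (i < L)%N ->
  Num.max (norm2 (h R X d p f0 fm x th i)) 1 <= B.
Hypothesis c_radius : forall i : nat, (i < L)%N -> forall (x : X) (v : 'rV[R]_d),
  norm2 (v - h R X d p f0 fm x th i) <= rho -> c i v (xi i) = h R X d p f0 fm x th i.
Hypotheses (rho_lt1 : rho < 1) (B_ge1 : 1 <= B).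
Hypotheses (k0_gt0 : 0 < k0) (kth_gt0 : 0 < k_th) (kh_gt0 : 0 < k_h) (kxi_gt0 : 0 < k_xi).

Section Perturbation.
Variable x : X.
Context {th2 : Params R p} {xi2 : Params R q} {e : R}.
Hypotheses (e_ge0 : 0 <= e) (k0e_le : k0 * e <= rho) (e_sth : e <= s_th)
  (e_sxi : e <= s_xi) (E_sh : 2 * k_xi * B * e <= s_h)
  (err_le : k_th * e * B + k_h * (2 * k_xi * B * e) <= rho).
Hypothesis th2_close : forall i, (i <= L)%N -> norm2 (th i - th2 i) <= e.
Hypothesis xi2_close : forall i, (i < L)%N -> norm2 (xi i - xi2 i) <= e.

Local Notation hv := (h R X d p f0 fm x th).
Local Notation hst := (hstates R X d p f0 fm x th).
Local Notation cst := (cstates R X d p q f0 fm c x th2 xi2).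
Local Notation pre m := (layer R X d p f0 fm x th2 m (cst m)).
Local Notation post m := (c m (layer R X d p f0 fm x th2 m (cst m)) (xi2 m%N)).
(* The error allowed on every corrected state. *)
Local Notation E := (2 * k_xi * B * e).

Let E_ge0 : 0 <= E.
Proof. by rewrite !mulr_ge0 ?ler0n ?(ltW kxi_gt0) // (le_trans ler01 B_ge1). Qed.

Lemma history_bound n : (n <= L)%N -> Num.max (tnorm (hst n)) 1 <= B.
Proof.
move=> nL; rewrite ge_max B_ge1 andbT.
apply: bigmax_le => [|j _]; first exact: le_trans ler01 B_ge1.
rewrite hstates_nth; apply: le_trans (h_bound x j (leq_trans (ltn_ord j) nL)).
by rewrite le_max lexx.
Qed.

Lemma history_close m : (forall j, (j < m)%N -> norm2 (hv j - post j) <= E) ->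
  tnorm (tsub (hst m) (cst m)) <= E.
Proof.
move=> close; apply: bigmax_le => [|j _]; first exact: E_ge0.
by rewrite /tsub hstates_nth cstates_nth; apply: close.
Qed.

Lemma pre_correction_close m : (m < L)%N ->
  (forall j, (j < m)%N -> norm2 (hv j - post j) <= E) -> norm2 (hv m - pre m) <= rho.
Proof.
case: m => [|m] mL close /=.
  apply: le_trans (f0_lip x (th2 0%N)) _; apply: le_trans k0e_le.
  by apply: ler_wpM2l; [exact: ltW | exact: th2_close].
apply: le_trans err_le.
exact: (nice_perturb (@norm2_tri R d) (fm_nice m.+1 mL) (imageT _ x) (ltW kth_gt0)
  (ltW kh_gt0) (th2_close m.+1 (ltnW mL)) e_sth (history_close m.+1 close) E_sh
  (history_bound m.+1 (ltnW mL))).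
Qed.

(* Main invariant: the correction snaps the perturbed layer back to h_m under xi_m,
   so only the change of correction parameters xi_m -> xi2_m contributes E. *)
Lemma corrected_state_close m : (m < L)%N -> norm2 (hv m - post m) <= E.
Proof.
elim/ltn_ind: m => m IH mL.
have pre_close := pre_correction_close m mL (fun j jm => IH j jm (ltn_trans jm mL)).
have snap : c m (pre m) (xi m) = hv m by apply: c_radius; rewrite // norm2B.
have hv_B : norm2 (hv m) <= B by apply: le_trans (h_bound x m mL); rewrite le_max lexx.
have pre_B : Num.max (norm2 (pre m)) 1 <= 2 * B.
  have := norm2D (hv m) (pre m - hv m); rewrite addrC subrK norm2B => pre_le.
  have := rho_lt1; have := B_ge1.
  by rewrite ge_max; move=> *; apply/andP; split; lra.
rewrite -{1}snap.
apply: le_trans (c_lip m mL (pre m) (xi2 m) (le_trans (xi2_close m mL) e_sxi)) _.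
have max_ge0 : 0 <= Num.max (norm2 (pre m)) 1 by rewrite le_max ler01 orbT.
have := ler_pM (mulr_ge0 (ltW kxi_gt0) max_ge0) (norm2_ge0 _)
  (ler_wpM2l (ltW kxi_gt0) pre_B) (xi2_close m mL).
lra.
Qed.

Lemma output_close :
  `|Fcorr R X d L p q f0 fm fL c x th2 xi2 - hL R X d L p f0 fm fL x th|
    <= k_th * e * B + k_h * E.
Proof.
rewrite distrC.
exact: (nice_perturb (fun a b c => ler_distD b a c) fL_nice (imageT _ x) (ltW kth_gt0)
  (ltW kh_gt0) (th2_close L (leqnn L)) e_sth
  (history_close L (fun j jL => corrected_state_close j jL)) E_sh
  (history_bound L (leqnn L))).
Qed.

End Perturbation.

Local Notation F := (Fcorr R X d L p q f0 fm fL c).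
Local Notation bound := (margin_bound k0 k_th k_h k_xi s_h s_th s_xi B rho).

Lemma perturbed_output_close x {th2 xi2 e} : 0 <= e -> e <= bound ->
  (forall i, (i <= L)%N -> norm2 (th i - th2 i) <= e) ->
  (forall i, (i < L)%N -> norm2 (xi i - xi2 i) <= e) ->
  `|F x th2 xi2 - hL R X d L p f0 fm fL x th| <= k_th * e * B + k_h * (2 * k_xi * B * e)
  /\ k_th * e * B + k_h * (2 * k_xi * B * e) <= rho.
Proof.
move=> e_ge0 e_bound th2_close xi2_close.
have [k0e e_sth e_sxi E_sh err_le] := margin_bound_conditions k0_gt0 kth_gt0 kh_gt0
  kxi_gt0 (lt_le_trans ltr01 B_ge1) e_bound.
by split; first exact: (output_close x e_ge0 k0e e_sth e_sxi E_sh err_le th2_close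
  xi2_close).
Qed.

Lemma unperturbed_output x {th2 xi2} : 0 < bound ->
  (forall i, (i <= L)%N -> norm2 (th i - th2 i) <= 0) ->
  (forall i, (i < L)%N -> norm2 (xi i - xi2 i) <= 0) ->
  F x th2 xi2 = hL R X d L p f0 fm fL x th.
Proof.
move=> bound_gt0 th2_close xi2_close.
have [err _] := perturbed_output_close x (lexx 0) (ltW bound_gt0) th2_close xi2_close.
by move: err; rewrite !(mulr0, mul0r) addr0 normr_le0 subr_eq0 => /eqP.
Qed.

Lemma output_stable x {th2 xi2 e} : 0 <= e -> e < bound ->
  (forall i, (i <= L)%N -> norm2 (th i - th2 i) <= e) ->
  (forall i, (i < L)%N -> norm2 (xi i - xi2 i) <= e) ->
  `|F x th2 xi2 - F x th xi| < 1.
Proof.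
move=> e_ge0 e_lt th2_close xi2_close.
have th_close i : (i <= L)%N -> norm2 (th i - th i) <= 0 by rewrite subrr norm2_0.
have xi_close i : (i < L)%N -> norm2 (xi i - xi i) <= 0 by rewrite subrr norm2_0.
rewrite (unperturbed_output x (le_lt_trans e_ge0 e_lt) th_close xi_close).
have [err err_rho] := perturbed_output_close x e_ge0 (ltW e_lt) th2_close xi2_close.
exact: le_lt_trans err (le_lt_trans err_rho rho_lt1).
Qed.

End CorrectedNetwork.

Theorem mainTheorem9 (R : realType) (X : Type) (d L : nat) (p q : nat -> nat)
  (f0 : X -> 'rV[R]_(p 0%N) -> 'rV[R]_d)
  (fm : forall i : nat, ('I_i -> 'rV[R]_d) -> 'rV[R]_(p i) -> 'rV[R]_d)
  (fL : ('I_L -> 'rV[R]_d) -> 'rV[R]_(p L) -> R)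
  (c : forall i : nat, 'rV[R]_d -> 'rV[R]_(q i) -> 'rV[R]_d)
  (th : Params R p) (xi : Params R q)
  (k0 k_th k_h k_xi s_h s_th s_xi B rho : R) :
  (0 < L)%N ->
  0 < k0 -> 0 < k_th -> 0 < k_h -> 0 < k_xi ->
  let hv := h R X d p f0 fm in
  let hst := hstates R X d p f0 fm in
  let F := Fcorr R X d L p q f0 fm fL c in
  (* Condition (C1) *)
  (forall i : nat, (1 <= i < L)%N ->
     nice (fun a b => norm2 (a - b)) (fm i) (th i) k_th k_h s_h s_th
          (range (fun x => hst x th i))) ->
  nice (fun a b : R => `|a - b|) fL (th L) k_th k_h s_h s_th
       (range (fun x => hst x th L)) ->
  (forall (x : X) (th0h : 'rV[R]_(p 0%N)),
     norm2 (f0 x (th 0%N) - f0 x th0h) <= k0 * norm2 (th 0%N - th0h)) ->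
  (forall i : nat, (i < L)%N -> forall (v : 'rV[R]_d) (xih : 'rV[R]_(q i)),
     norm2 (xi i - xih) <= s_xi ->
     norm2 (c i v (xi i) - c i v xih) <= k_xi * Num.max (norm2 v) 1 * norm2 (xi i - xih)) ->
  (* Condition (C2) *)
  (forall x : X, (forall i : nat, (i < L)%N -> Num.max (norm2 (hv x th i)) 1 <= B) /\
                 Num.max `|hL R X d L p f0 fm fL x th| 1 <= B) ->
  (* correction functions of radius rho < 1 *)
  (forall i : nat, (i < L)%N -> forall (x : X) (v : 'rV[R]_d),
     norm2 (v - hv x th i) <= rho -> c i v (xi i) = hv x th i) ->
  rho < 1 ->
  (forall x : X, F x th xi = 1 \/ F x th xi = -1) ->
  let bound :=
    Num.min (B / k0) (Num.min (rho / k0) (Num.min s_th (Num.min s_xi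
    (Num.min (1 / (2 * k_th)) (Num.min (rho / (2 * k_th * B))
    (Num.min (s_h / (2 * k_xi * B)) (Num.min (rho / (4 * B * k_h * k_xi))
    (1 / (4 * k_h * k_xi))))))))) in
  forall x : X,
    (bound%:E <= all_layer_margin (full_add R p q) (full_norm R L p q)
                   (fun x' v => F x' v.1 v.2) (th, xi) x (0 <= F x th xi)%R)%E /\
    (forall (d' : nat) (pi1 : forall i : nat, 'I_(p i) -> 'I_d')
            (pi2 : forall i : nat, 'I_(q i) -> 'I_d') (th' : 'rV[R]_d'),
       (forall i : nat, (i <= L)%N -> injective (pi1 i)) ->
       (forall i : nat, (i < L)%N -> injective (pi2 i)) ->
       (forall i : nat, (i <= L)%N -> tau1 R p d' pi1 th' i = th i) ->
       (forall i : nat, (i < L)%N -> tau2 R q d' pi2 th' i = xi i) ->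
       let F' := fun (x' : X) (t : 'rV[R]_d') =>
                   F x' (tau1 R p d' pi1 t) (tau2 R q d' pi2 t) in
       (bound%:E <= all_layer_margin (fun a b : 'rV[R]_d' => (a + b)%R) norm2
                      F' th' x (0 <= F' x th')%R)%E).
Proof.
move=> _ k0_gt0 kth_gt0 kh_gt0 kxi_gt0 hv hst F fm_nice fL_nice f0_lip c_lip C2
  c_radius rho_lt1 F_pm bound x.
have B_ge1 : 1 <= B by apply: le_trans (C2 x).2; rewrite le_max lexx orbT.
have h_bound y i : (i < L)%N -> Num.max (norm2 (hv y th i)) 1 <= B by exact: (C2 y).1.
(* If bound <= 0 the claim holds since margins are nonnegative. *)
have [bound_le0|bound_gt0] := lerP bound 0.
  split=> [|d' pi1 pi2 th' _ _ _ _]; cbv zeta; apply: le_trans _ (margin_ge0 _);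
    rewrite ?lee_fin // => delta; [exact: sqrtr_ge0 | exact: norm2_ge0].
have stable := output_stable fm_nice fL_nice f0_lip c_lip h_bound c_radius rho_lt1
  B_ge1 k0_gt0 kth_gt0 kh_gt0 kxi_gt0 x.
split.
  apply: margin_lower_bound => [|delta small]; first exact: F_pm.
  have [th_close xi_close] := full_perturbation_blocks L (th, xi) delta.
  exact: stable (sqrtr_ge0 _) small th_close xi_close.
move=> d' pi1 pi2 th' pi1_inj pi2_inj th'_th th'_xi; cbv zeta.
have F'_th : F x (tau1 R p d' pi1 th') (tau2 R q d' pi2 th') = F x th xi.
  rewrite /F !(unperturbed_output fm_nice fL_nice f0_lip c_lip h_bound c_radius rho_lt1
    B_ge1 k0_gt0 kth_gt0 kh_gt0 kxi_gt0 x bound_gt0) // => i iL;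
    by rewrite ?th'_th ?th'_xi // subrr norm2_0.
apply: margin_lower_bound => [|delta small]; first by rewrite F'_th; exact: F_pm.
rewrite F'_th; apply: stable (norm2_ge0 _) small _ _ => i iL.
  by rewrite -(th'_th i iL); exact: shared_block_le (pi1_inj i iL).
by rewrite -(th'_xi i iL); exact: shared_block_le (pi2_inj i iL).
Qed.
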